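(* The symmetrized bidisc $\mathbb{G}=\{(z_1+z_2,z_1z_2):z_1,z_2\in\mathbb{D}\}$ is biholomorphic to the domain $\mathcal{D}_1=\{(z_1,z_2)\in\mathbb{C}^2: 1+|z_1|^2-|z_2|^2>|1+z_1^2-z_2^2|,\ \mathrm{Im}(z_1(1+\overline{z_2}))>0\}$.
   Context: $\mathbb{D}$ denotes the open unit disc in $\mathbb{C}$. *)

From Stdlib Require Import Reals.
From Coquelicot Require Import Coquelicot.
Open Scope C_scope.

Definition C2 : NormedModule C_AbsRing :=
  prod_NormedModule C_AbsRing C_NormedModule C_NormedModule.

Definition disc (z : C) : Prop := (Cmod z < 1)%R.

(* Complex (Frechet) differentiability: the derivative is C-linear. *)
Definition holomorphic_on (U : C2 -> Prop) (f : C2 -> C2) : Prop :=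
  forall x : C2, U x -> exists l : C2 -> C2, filterdiff f (locally x) l.

Definition biholomorphic (U V : C2 -> Prop) : Prop :=
  exists (f g : C2 -> C2),
    holomorphic_on U f /\ holomorphic_on V g /\
    (forall x, U x -> V (f x)) /\ (forall y, V y -> U (g y)) /\
    (forall x, U x -> g (f x) = x) /\ (forall y, V y -> f (g y) = y).

Definition symbidisc (p : C2) : Prop :=
  exists z1 z2 : C, disc z1 /\ disc z2 /\ p = (z1 + z2, z1 * z2).

Definition D1 (p : C2) : Prop :=
  let z1 := fst p in let z2 := snd p in
  (Cmod (1 + z1 * z1 - z2 * z2) < 1 + Cmod z1 ^ 2 - Cmod z2 ^ 2)%R /\
  (0 < Im (z1 * (1 + Cconj z2)))%R.

(* Write a point of the symmetrized bidisc as (a + b, a b) and put d = 1 + a b, which does not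
   vanish for a, b in the disc.  The rational map (s, p) |-> (i (1 - p) / (1 + p), s / (1 + p))
   sends it to (z1, z2) with 1 + z1^2 - z2^2 = -((a - b) / d)^2, so after multiplication by |d|^2
   the two inequalities defining D_1 read
     0 < (1 - |a|^2) (1 - |b|^2)   and   0 < (1 - |a|^2) |1 + b|^2 + (1 - |b|^2) |1 + a|^2,
   which together hold exactly when |a| < 1 and |b| < 1.  The inverse map
   (z1, z2) |-> (2 i z2 / (i + z1), (i - z1) / (i + z1)) is defined on D_1, and every point of D_1
   is reached because s and p can always be written as a + b and a b (roots of t^2 - s t + p).
   Both maps are rational with non-vanishing denominators, hence holomorphic. *)

From Pilot Require Import Defs.
From Stdlib Require Import Reals Lra Psatz.
From Coquelicot Require Import Coquelicot.
Open Scope C_scope.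

Local Notation CK := (AbsRing_NormedModule C_AbsRing).
Local Notation ex_Cdiff f x := (@ex_filterdiff C_AbsRing _ CK f (locally x)).

Lemma C_AbsRing_mult_comm (u v : C_AbsRing) : mult u v = mult v u.
Proof. apply Cmult_comm. Qed.

Lemma Cinv_sub_tangent (y z : C) : y <> 0 -> z <> 0 ->
  / y - / z - (y - z) * (- / (z * z)) = (y - z) * (y - z) / (y * (z * z)).
Proof. intros Hy Hz. field. auto. Qed.

Lemma Cmod_ge_half (y z : C) : (Cmod (y - z) < Cmod z / 2)%R -> (Cmod z / 2 <= Cmod y)%R.
Proof.
  intros H. pose proof (Cmod_triangle y (z - y)) as Ht.
  replace (y + (z - y)) with z in Ht by ring.
  replace (z - y) with (- (y - z)) in Ht by ring. rewrite Cmod_opp in Ht. lra.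
Qed.

(* For |y - z| < |z|/2 we have |y| >= |z|/2, so the remainder (y - z)^2 / (y z^2) of
   [Cinv_sub_tangent] is at most 2 |y - z|^2 / |z|^3. *)
Lemma is_derive_Cinv (z : C) : z <> 0 -> @is_derive C_AbsRing CK Cinv z (- / (z * z)).
Proof.
  intros Hz. split; [apply is_linear_scal_l|].
  intros x Hx. apply (@is_filter_lim_locally_unique _ CK) in Hx. subst x.
  intros [eps Heps]. apply (@locally_norm_le_locally _ CK).
  pose proof (proj1 (Cmod_gt_0 z) Hz) as Hm.
  remember (Cmod z) as m eqn:Em.
  assert (Hd : (0 < Rmin (m / 2) (eps * m ^ 3 / 2))%R)
    by (apply Rmin_pos; [lra | pose proof (pow_lt m 3 Hm); nra]).
  exists (mkposreal _ Hd). intros y Hy. change C in y.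
  change (Cmod (y - z) < Rmin (m / 2) (eps * m ^ 3 / 2))%R in Hy.
  change (Cmod (/ y - / z - (y - z) * (- / (z * z))) <= eps * Cmod (y - z))%R.
  pose proof (Rmin_l (m / 2) (eps * m ^ 3 / 2)).
  pose proof (Rmin_r (m / 2) (eps * m ^ 3 / 2)).
  assert (Hy_big : (m / 2 <= Cmod y)%R) by (subst m; apply Cmod_ge_half; lra).
  assert (Hy0 : y <> 0) by (intros Hy0; rewrite Hy0, Cmod_0 in Hy_big; lra).
  rewrite Cinv_sub_tangent, Cmod_div, !Cmod_mult, <- Em by auto using Cmult_neq_0.
  pose proof (Cmod_ge_0 (y - z)).
  assert (Hbound : (Cmod (y - z) <= eps * (Cmod y * (m * m)))%R).
  { apply Rle_trans with (eps * ((m / 2) * (m * m)))%R; [simpl in *; lra|].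
    apply Rmult_le_compat_l; [lra|]. apply Rmult_le_compat_r; nra. }
  apply Rle_div_l; [apply Rmult_lt_0_compat; nra|].
  replace (eps * Cmod (y - z) * (Cmod y * (m * m)))%R
    with (Cmod (y - z) * (eps * (Cmod y * (m * m))))%R by ring.
  apply Rmult_le_compat_l; assumption.
Qed.

(* [C] carries two normed-module structures with the same norm but different
   uniformities; as targets of differentiation they are interchangeable. *)
Lemma filterdiff_C_NormedModule {U : NormedModule C_AbsRing} (f l : U -> C) F :
  @filterdiff C_AbsRing U CK f F l <-> @filterdiff C_AbsRing U C_NormedModule f F l.
Proof. split; intros [[] Hdom]; split; [split| |split|]; assumption. Qed.

Section ComplexDifferentiability.

Context {U : NormedModule C_AbsRing}.
Implicit Types (f g : U -> C) (x : U).

Lemma ex_Cdiff_const (c : C) x : ex_Cdiff (fun _ : U => c) x.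
Proof. apply ex_filterdiff_const. Qed.

Lemma ex_Cdiff_plus f g x : ex_Cdiff f x -> ex_Cdiff g x -> ex_Cdiff (fun y => f y + g y) x.
Proof. apply (ex_filterdiff_plus_fct (V := CK)). Qed.

Lemma ex_Cdiff_minus f g x : ex_Cdiff f x -> ex_Cdiff g x -> ex_Cdiff (fun y => f y - g y) x.
Proof. apply (ex_filterdiff_minus_fct (V := CK)). Qed.

Lemma ex_Cdiff_mult f g x : ex_Cdiff f x -> ex_Cdiff g x -> ex_Cdiff (fun y => f y * g y) x.
Proof. exact (ex_filterdiff_mult_fct f g x C_AbsRing_mult_comm). Qed.

Lemma ex_Cdiff_inv f x : ex_Cdiff f x -> f x <> 0 -> ex_Cdiff (fun y => / f y) x.
Proof.
  intros Hf Hfx. apply (ex_filterdiff_comp' (V := CK) (W := CK) f Cinv); [exact Hf|].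
  eexists. exact (is_derive_Cinv _ Hfx).
Qed.

Lemma ex_Cdiff_div f g x :
  ex_Cdiff f x -> ex_Cdiff g x -> g x <> 0 -> ex_Cdiff (fun y => f y / g y) x.
Proof. intros Hf Hg Hgx. apply ex_Cdiff_mult; [exact Hf|]. now apply ex_Cdiff_inv. Qed.

End ComplexDifferentiability.

Lemma ex_Cdiff_fst (x : C2) : ex_Cdiff (fun y : C2 => fst y) x.
Proof.
  exists (fun h : C2 => fst h). apply filterdiff_C_NormedModule.
  apply filterdiff_linear, is_linear_fst.
Qed.

Lemma ex_Cdiff_snd (x : C2) : ex_Cdiff (fun y : C2 => snd y) x.
Proof.
  exists (fun h : C2 => snd h). apply filterdiff_C_NormedModule.
  apply filterdiff_linear, is_linear_snd.
Qed.

Lemma holomorphic_on_pair (D : C2 -> Prop) (f g : C2 -> C) :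
  (forall x, D x -> ex_Cdiff f x) -> (forall x, D x -> ex_Cdiff g x) ->
  holomorphic_on D (fun x => (f x, g x)).
Proof.
  intros Hf Hg x Hx.
  destruct (Hf x Hx) as [lf Hlf%filterdiff_C_NormedModule].
  destruct (Hg x Hx) as [lg Hlg%filterdiff_C_NormedModule].
  eexists.
  apply (filterdiff_comp'_2 f g (fun p q => (p, q) : C2) x lf lg
           (fun p q => (p, q) : C2) Hlf Hlg).
  apply (filterdiff_linear (fun t : C2 => (fst t, snd t) : C2)).
  apply is_linear_prod; [apply is_linear_fst | apply is_linear_snd].
Qed.

Create HintDb Cdiff.
#[local] Hint Resolve ex_Cdiff_const ex_Cdiff_plus ex_Cdiff_minus ex_Cdiff_mult
  ex_Cdiff_div ex_Cdiff_fst ex_Cdiff_snd : Cdiff.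

Lemma Csqrt_exists (c : C) : exists w : C, w * w = c.
Proof.
  destruct c as [x y].
  pose proof (Cmod2_alt (x, y)) as Hr2. pose proof (re_le_Cmod (x, y)) as Hrx.
  set (r := Cmod (x, y)) in *. unfold Re, Im in Hr2, Hrx; cbn [fst snd] in Hr2, Hrx.
  apply Rabs_le_between in Hrx.
  set (u := sqrt ((r + x) / 2)). set (v := sqrt ((r - x) / 2)).
  assert (Hu : (u * u = (r + x) / 2)%R) by (apply sqrt_sqrt; lra).
  assert (Hv : (v * v = (r - x) / 2)%R) by (apply sqrt_sqrt; lra).
  assert (Huv : (u * v = Rabs y / 2)%R).
  { unfold u, v. rewrite <- sqrt_mult_alt by lra.
    replace ((r + x) / 2 * ((r - x) / 2))%R with (Rsqr (y / 2)) by (unfold Rsqr; nra).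
    rewrite sqrt_Rsqr_abs, Rabs_div, (Rabs_pos_eq 2) by lra. reflexivity. }
  destruct (Rle_or_lt 0 y) as [Hy|Hy];
    [exists (u, v); rewrite Rabs_pos_eq in Huv by lra
    |exists (u, - v)%R; rewrite Rabs_left in Huv by lra];
    apply injective_projections; simpl; lra.
Qed.

Lemma C_Vieta (s p : C) : exists a b : C, a + b = s /\ a * b = p.
Proof.
  destruct (Csqrt_exists (s * s - 4 * p)) as [w Hw].
  exists ((s + w) / 2), ((s - w) / 2). split; [field|].
  transitivity ((s * s - w * w) / 4); [field|].
  rewrite Hw. field.
Qed.

Lemma Rlt_0_scale_iff (u v M : R) : (0 < M -> u * M = v -> (0 < u <-> 0 < v))%R.
Proof. intros HM <-. split; intros H; [nra|]. destruct (Rle_or_lt u 0); nra. Qed.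

Lemma both_lt_1_iff (A B A' B' : R) :
  (0 <= A' -> 0 <= B' -> (A < 1 -> 0 < A') -> (B < 1 -> 0 < B') ->
   (0 < (1 - A) * (1 - B) /\ 0 < (1 - A) * B' + (1 - B) * A') <-> (A < 1 /\ B < 1))%R.
Proof.
  intros HA' HB' HA HB. split.
  - intros [Hprod Hsum].
    destruct (Rlt_or_le A 1) as [Ha|Ha], (Rlt_or_le B 1) as [Hb|Hb];
      [tauto | exfalso; nra | exfalso; nra | exfalso].
    assert ((1 - A) * B' <= 0 /\ (1 - B) * A' <= 0)%R as [] by (split; nra). lra.
  - intros [Ha Hb]. specialize (HA Ha). specialize (HB Hb). split; nra.
Qed.

Lemma Ci_sqr : Ci * Ci = - (1).
Proof. apply injective_projections; simpl; ring. Qed.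

Lemma C2Ci_nz : 2 * Ci <> 0.
Proof. apply Cmult_neq_0; [intros H; injection H; lra | exact Ci_nz]. Qed.

Lemma Cmod_div_sqr (w d : C) : d <> 0 -> (Cmod (w / d) ^ 2 * Cmod d ^ 2 = Cmod w ^ 2)%R.
Proof.
  intros Hd. pose proof (proj1 (Cmod_gt_0 _) Hd).
  rewrite Cmod_div by exact Hd. field. lra.
Qed.

Lemma Cmod2_ab_identity (a b : C) :
  (Cmod (1 + a * b) ^ 2 + Cmod (1 - a * b) ^ 2 - Cmod (a + b) ^ 2 - Cmod (a - b) ^ 2
   = 2 * (1 - Cmod a ^ 2) * (1 - Cmod b ^ 2))%R.
Proof. rewrite !Cmod2_alt. destruct a as [a1 a2], b as [b1 b2]. simpl. ring. Qed.

(* [Defs.disc] is qualified because Stdlib's Reals exports another [disc]. *)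
Lemma disc_iff_Cmod_sqr (a : C) : Defs.disc a <-> (Cmod a ^ 2 < 1)%R.
Proof. unfold Defs.disc. pose proof (Cmod_ge_0 a). split; intros; nra. Qed.

Lemma Cmod_1_plus_disc_pos (a : C) : Defs.disc a -> (0 < Cmod (1 + a))%R.
Proof.
  intros Ha. apply Cmod_gt_0. intros E.
  assert (a = - (1)) as -> by (replace a with ((1 + a) - 1) by ring; rewrite E; ring).
  unfold Defs.disc in Ha. rewrite Cmod_m1 in Ha. lra.
Qed.

Lemma disc_mult_1_plus_nz (a b : C) : Defs.disc a -> Defs.disc b -> 1 + a * b <> 0.
Proof.
  unfold Defs.disc. intros Ha Hb E.
  assert (Cmod (a * b) = 1)%R as Eab.
  { rewrite <- Cmod_m1. f_equal. replace (a * b) with ((1 + a * b) - 1) by ring. rewrite E. ring. }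
  rewrite Cmod_mult in Eab. pose proof (Cmod_ge_0 a). pose proof (Cmod_ge_0 b). nra.
Qed.

Definition sym_to_D1 (x : C2) : C2 :=
  (Ci * (1 - snd x) / (1 + snd x), fst x / (1 + snd x)).

Definition D1_to_sym (y : C2) : C2 :=
  (2 * Ci * snd y / (Ci + fst y), (Ci - fst y) / (Ci + fst y)).

Lemma symbidisc_denom_nz (x : C2) : symbidisc x -> 1 + snd x <> 0.
Proof. intros (a & b & Ha & Hb & ->). now apply disc_mult_1_plus_nz. Qed.

(* At [z1 = -i] the first inequality of [D1] forces [|z2| < 1], the second [Re z2 < -1]. *)
Lemma D1_denom_nz (y : C2) : D1 y -> Ci + fst y <> 0.
Proof.
  destruct y as [z1 z2]. change C in z1, z2. unfold D1; cbn [fst snd]. intros [H1 H2] E.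
  assert (z1 = - Ci) as -> by (replace z1 with ((Ci + z1) - Ci) by ring; rewrite E; ring).
  replace (1 + - Ci * - Ci - z2 * z2) with (1 + Ci * Ci - z2 * z2) in H1 by ring.
  rewrite Ci_sqr in H1.
  replace (1 + - (1) - z2 * z2) with (- (z2 * z2)) in H1 by ring.
  rewrite Cmod_opp, Cmod_mult, Cmod_opp, Cmod_Ci in H1.
  assert (Hz2 : (Cmod z2 ^ 2 < 1)%R) by nra.
  rewrite Cmod2_alt in Hz2. destruct z2 as [p q].
  unfold Cmult, Cplus, Copp, Cconj, Ci, RtoC, Re, Im in *; simpl in *. nra.
Qed.

Lemma D1_to_sym_denom_nz (y : C2) : Ci + fst y <> 0 -> 1 + snd (D1_to_sym y) <> 0.
Proof.
  intros Hy. unfold D1_to_sym; cbn [snd].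
  replace (1 + (Ci - fst y) / (Ci + fst y)) with (2 * Ci / (Ci + fst y)) by (field; exact Hy).
  apply Cmult_neq_0; [exact C2Ci_nz|].
  intros E. apply C1_nz. rewrite <- (Cinv_l _ Hy), E. ring.
Qed.

Lemma D1_to_symK (x : C2) : 1 + snd x <> 0 -> D1_to_sym (sym_to_D1 x) = x.
Proof.
  intros Hx. destruct x as [s p]. change C in s, p. cbn [snd] in Hx.
  unfold D1_to_sym, sym_to_D1; cbn [fst snd].
  assert (Ci * (1 + p) + Ci * (1 - p) <> 0)
    by (replace (Ci * (1 + p) + Ci * (1 - p)) with (2 * Ci) by ring; exact C2Ci_nz).
  apply (f_equal2 (@pair C C)); field; auto.
Qed.

Lemma sym_to_D1K (y : C2) : Ci + fst y <> 0 -> sym_to_D1 (D1_to_sym y) = y.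
Proof.
  intros Hy. destruct y as [z1 z2]. change C in z1, z2. cbn [fst] in Hy.
  unfold D1_to_sym, sym_to_D1; cbn [fst snd].
  assert (Ci + z1 + (Ci - z1) <> 0)
    by (replace (Ci + z1 + (Ci - z1)) with (2 * Ci) by ring; exact C2Ci_nz).
  apply (f_equal2 (@pair C C)); field; auto.
Qed.

Lemma sym_to_D1_quadratic (a b : C) : 1 + a * b <> 0 ->
  1 + Ci * (1 - a * b) / (1 + a * b) * (Ci * (1 - a * b) / (1 + a * b))
    - (a + b) / (1 + a * b) * ((a + b) / (1 + a * b))
  = - ((a - b) / (1 + a * b) * ((a - b) / (1 + a * b))).
Proof.
  intros HD.
  transitivity (1 + Ci * Ci * ((1 - a * b) / (1 + a * b) * ((1 - a * b) / (1 + a * b)))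
    - (a + b) / (1 + a * b) * ((a + b) / (1 + a * b))); [field; exact HD|].
  rewrite Ci_sqr. field. exact HD.
Qed.

Lemma Im_sym_to_D1 (a b : C) : 1 + a * b <> 0 ->
  (Im (Ci * (1 - a * b) / (1 + a * b) * (1 + Cconj ((a + b) / (1 + a * b))))
     * Cmod (1 + a * b) ^ 2
   = ((1 - Cmod a ^ 2) * Cmod (1 + b) ^ 2 + (1 - Cmod b ^ 2) * Cmod (1 + a) ^ 2) / 2)%R.
Proof.
  intros HD. pose proof (pow_lt _ 2 (proj1 (Cmod_gt_0 _) HD)) as HM.
  rewrite !Cmod2_alt in *.
  destruct a as [a1 a2], b as [b1 b2].
  unfold Cdiv, Cinv, Cmult, Cplus, Cminus, Copp, Cconj, Ci, RtoC, Re, Im in *; simpl in *.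
  field. nra.
Qed.

Lemma D1_sym_to_D1_iff (a b : C) : 1 + a * b <> 0 ->
  D1 (sym_to_D1 (a + b, a * b)) <->
  (0 < (1 - Cmod a ^ 2) * (1 - Cmod b ^ 2) /\
   0 < (1 - Cmod a ^ 2) * Cmod (1 + b) ^ 2 + (1 - Cmod b ^ 2) * Cmod (1 + a) ^ 2)%R.
Proof.
  intros HD. unfold D1, sym_to_D1; cbn [fst snd].
  pose proof (pow_lt _ 2 (proj1 (Cmod_gt_0 _) HD)) as HM.
  rewrite sym_to_D1_quadratic, Cmod_opp, Cmod_mult by exact HD.
  pose proof (Cmod_div_sqr (a - b) _ HD) as Eab.
  pose proof (Cmod_div_sqr (Ci * (1 - a * b)) _ HD) as Ez1.
  pose proof (Cmod_div_sqr (a + b) _ HD) as Ez2.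
  rewrite Cmod_mult, Cmod_Ci, Rmult_1_l in Ez1.
  pose proof (Cmod2_ab_identity a b) as Eid.
  rewrite (Rlt_0_scale_iff _ _ _ HM (Im_sym_to_D1 a b HD)).
  rewrite Rminus_lt_0.
  rewrite (Rlt_0_scale_iff _ (2 * ((1 - Cmod a ^ 2) * (1 - Cmod b ^ 2)))%R _ HM) by nra.
  split; intros [H1 H2]; split; lra.
Qed.

Lemma D1_sym_to_D1_iff_disc (a b : C) : 1 + a * b <> 0 ->
  D1 (sym_to_D1 (a + b, a * b)) <-> Defs.disc a /\ Defs.disc b.
Proof.
  intros HD. rewrite D1_sym_to_D1_iff by exact HD. rewrite !disc_iff_Cmod_sqr.
  apply both_lt_1_iff; try apply pow2_ge_0;
    intros Hlt%disc_iff_Cmod_sqr; apply pow_lt, Cmod_1_plus_disc_pos, Hlt.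
Qed.

Lemma sym_to_D1_maps (x : C2) : symbidisc x -> D1 (sym_to_D1 x).
Proof.
  intros (a & b & Ha & Hb & ->).
  apply D1_sym_to_D1_iff_disc; auto using disc_mult_1_plus_nz.
Qed.

Lemma D1_to_sym_maps (y : C2) : D1 y -> symbidisc (D1_to_sym y).
Proof.
  intros Hy. pose proof (D1_denom_nz y Hy) as Hn.
  destruct (C_Vieta (fst (D1_to_sym y)) (snd (D1_to_sym y))) as (a & b & Hs & Hp).
  assert (Eab : D1_to_sym y = (a + b, a * b)) by (rewrite Hs, Hp; apply surjective_pairing).
  assert (HD : 1 + a * b <> 0) by (rewrite Hp; now apply D1_to_sym_denom_nz).
  exists a, b. enough (Defs.disc a /\ Defs.disc b) by tauto.
  rewrite <- D1_sym_to_D1_iff_disc, <- Eab, sym_to_D1K by assumption. exact Hy.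
Qed.

Theorem theorem3p2 : biholomorphic symbidisc D1.
Proof.
  exists sym_to_D1, D1_to_sym.
  split; [|split; [|split; [|split; [|split]]]].
  - apply holomorphic_on_pair; intros x Hx%symbidisc_denom_nz; auto with Cdiff.
  - apply holomorphic_on_pair; intros y Hy%D1_denom_nz; auto with Cdiff.
  - exact sym_to_D1_maps.
  - exact D1_to_sym_maps.
  - intros x Hx. now apply D1_to_symK, symbidisc_denom_nz.
  - intros y Hy. now apply sym_to_D1K, D1_denom_nz.
Qed.
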